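(* Let $P$ be a distribution on $\mathcal X\times\mathcal Y$ with every $\mathbf x\in\mathcal X\subseteq\mathbb R^d$ satisfying $\|\mathbf x\|\le1$ and $\mathcal Y=\{-1,+1\}$ or $[-1,1]$; let $(\mathbf x_i,y_i)_{i=1}^n$ be i.i.d. from $P$. Let $R>0$, $\mathscr W=\{\mathbf w:\|\mathbf w\|\le R\}$, $\ell:\mathbb R\to\mathbb R_+$ convex, $\alpha$-exp-concave on $|z|\le R$, $|\ell'|\le G$, $\mathcal L(\mathbf w)=\mathrm E[\ell(y\mathbf w^\top\mathbf x)]$, $\mathbf w_*\in\arg\min_{\mathscr W}\mathcal L$, $\mathbf H=\mathrm E[\mathbf x\mathbf x^\top]$, $\beta=\frac12\min(\alpha,1/(4GR))$, and suppose Assumption (II) holds with constant $\theta>0$. Let $\mathbf w_1,\dots,\mathbf w_n$ be the iterates of the algorithm in the context and $A=\sum_{i=1}^n\|\mathbf w_i-\mathbf w_*\|_{\mathbf H}^2$. If $A\le4R^2/n$, then \[ \sum_{i=1}^n\left(\mathcal L(\mathbf w_i)-\mathcal L(\mathbf w_* )\right)+\frac{\theta\beta}2\sum_{i=1}^n\|\mathbf w_i-\mathbf w_*\|_{\mathbf H}^2\le2RG. \]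
   Context: $\|\mathbf w\|_{\mathbf H}^2=\mathbf w^\top\mathbf H\mathbf w$. Assumption (II): $\mathrm E[(\ell'(y\mathbf w^\top\mathbf x))^2\mathbf x\mathbf x^\top]\succeq\theta\,\mathrm E[\mathbf x\mathbf x^\top]$ for all $\mathbf w\in\mathscr W$. Algorithm with inputs $\eta_1>0$, $a>0$: $\mathbf w_1=\mathbf 0$, $\mathbf M_0=a\mathbf I$; for $i=1,\dots,n$: $\mathbf M_i=\mathbf M_{i-1}+\mathbf x_i\mathbf x_i^\top$, $\mathbf Z_i=\mathbf M_i/i$, $\mathbf v_i=\ell'(y_i\mathbf w_i^\top\mathbf x_i)\mathbf x_i$, $\eta_i=\eta_1/i$, $\mathbf w_{i+1}=\arg\min_{\mathbf w\in\mathscr W}\eta_i\langle\mathbf w,\mathbf v_i\rangle+\frac12(\mathbf w-\mathbf w_i)^\top\mathbf Z_i(\mathbf w-\mathbf w_i)$. *)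

From HB Require Import structures.
From mathcomp Require Import all_boot all_order all_algebra.
From mathcomp Require Import all_classical all_reals all_analysis.
Set Implicit Arguments.
Unset Strict Implicit.
Unset Printing Implicit Defensive.
Import Order.TTheory GRing.Theory Num.Theory.
Import numFieldNormedType.Exports.
Local Open Scope ring_scope.

Section Defs.
Variable R : realType.

Definition dotv (d : nat) (u v : 'cV[R]_d) : R := \sum_(k < d) u k 0 * v k 0.
Definition enorm (d : nat) (u : 'cV[R]_d) : R := Num.sqrt (dotv u u).

(* quadratic form v^T M v, so that ||v||_H^2 = qform H v *)
Definition qform (d : nat) (M : 'M[R]_d) (v : 'cV[R]_d) : R := (v^T *m M *m v) 0 0.

Definition convex_on_R (f : R -> R) : Prop :=
  forall a b t : R, 0 <= t <= 1 ->
    f (t * a + (1 - t) * b) <= t * f a + (1 - t) * f b.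

Definition exp_concave_on (alpha r : R) (f : R -> R) : Prop :=
  forall a b t : R, `|a| <= r -> `|b| <= r -> 0 <= t <= 1 ->
    t * expR (- alpha * f a) + (1 - t) * expR (- alpha * f b)
      <= expR (- alpha * f (t * a + (1 - t) * b)).

Context (dT : measure_display) (T : measurableType dT) (P : probability T R).

Definition risk (d : nat) (l : R -> R) (x : T -> 'cV[R]_d) (y : T -> R)
    (w : 'cV[R]_d) : R :=
  \int[P]_(t in setT) l (y t * dotv w (x t)).

Definition second_moment (d : nat) (x : T -> 'cV[R]_d) : 'M[R]_d :=
  \matrix_(i, j) \int[P]_(t in setT) (x t i 0 * x t j 0).

Definition weighted_moment (d : nat) (l : R -> R) (x : T -> 'cV[R]_d)
    (y : T -> R) (w : 'cV[R]_d) : 'M[R]_d :=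
  \matrix_(i, j) \int[P]_(t in setT)
     ((derive1 l (y t * dotv w (x t))) ^+ 2 * (x t i 0 * x t j 0)).

End Defs.

(* Algorithm quantities, for sample s : nat -> T (s i = (x_i, y_i), i >= 1) *)
Section Alg.
Variables (R : realType) (dT : measure_display) (T : measurableType dT).

Definition Mmat (d : nat) (x : T -> 'cV[R]_d) (s : nat -> T) (a : R) (i : nat)
  : 'M[R]_d := a%:M + \sum_(1 <= k < i.+1) (x (s k) *m (x (s k))^T).

Definition Zmat (d : nat) (x : T -> 'cV[R]_d) (s : nat -> T) (a : R) (i : nat)
  : 'M[R]_d := (i%:R)^-1 *: Mmat x s a i.

Definition step_obj (d : nat) (l : R -> R) (x : T -> 'cV[R]_d) (y : T -> R)
  (s : nat -> T) (eta1 a : R) (wi : 'cV[R]_d) (i : nat) (w : 'cV[R]_d) : R :=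
  let vi := (derive1 l (y (s i) * dotv wi (x (s i)))) *: x (s i) in
  (eta1 / i%:R) * dotv w vi
  + 2^-1 * qform (Zmat x s a i) (w - wi).

End Alg.

(* Exp-concavity of l on [-R, R] gives the pointwise bound
     l z - l z' <= l'(z) (z - z') - beta/2 (l'(z) (z - z'))^2
   for the margins z = y w_i^T x and z' = y w_*^T x.  Writing a = (w_i - w_* )^T x,
   the linear term is at most G |a| <= G (a^2 / c + c) / 2, and the quadratic term
   is turned into theta ||w_i - w_*||_H^2 by Assumption (II) after taking
   expectations.  Hence
     L(w_i) - L(w_* ) + theta beta / 2 ||w_i - w_*||_H^2 <= G (||w_i - w_*||_H^2 / c + c) / 2,
   and summing over i with c = 2R/n and A <= 4R^2/n gives RG + RG. *)

From HB Require Import structures.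
From mathcomp Require Import all_boot all_order all_algebra.
From mathcomp Require Import all_classical all_reals all_analysis.
From mathcomp Require Import ring lra.
Import Order.TTheory GRing.Theory Num.Theory.
Import numFieldNormedType.Exports.
Local Open Scope ring_scope.
Local Open Scope classical_set_scope.

Set Implicit Arguments.
Unset Strict Implicit.
Unset Printing Implicit Defensive.

Section RealFunctions.
Variable R : realType.
Implicit Types (g : R -> R) (r z : R).

Lemma derive1_quotient_cvg g z : derivable g z 1 ->
  (fun h => h^-1 * (g (h + z) - g z)) @ (0:R)^' --> derive1 g z.
Proof.
move=> dg; have : cvg ((fun h => h^-1 *: ((g \o shift z) (h *: 1) - g z)) @ 0^') := dg.
by under eq_fun do rewrite /= scaler1.
Qed.

Section Concave.
Variables (g : R -> R) (r : R).
Hypothesis gcave : forall a b t, `|a| <= r -> `|b| <= r -> 0 <= t <= 1 ->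
  t * g a + (1 - t) * g b <= g (t * a + (1 - t) * b).

Lemma concave_chord z z' h : `|z| <= r -> `|z'| <= r -> z != z' ->
  0 <= h / (z' - z) <= 1 -> h / (z' - z) * (g z' - g z) <= g (h + z) - g z.
Proof.
move=> hz hz' zz' t01; have := gcave hz' hz t01.
suff -> : h / (z' - z) * z' + (1 - h / (z' - z)) * z = h + z by lra.
by field; rewrite subr_eq0 eq_sym.
Qed.

Lemma concave_le_tangent z z' : `|z| <= r -> `|z'| <= r -> derivable g z 1 ->
  g z' - g z <= derive1 g z * (z' - z).
Proof.
move=> hz hz' /derive1_quotient_cvg gq.
have [lt|gt|->] := ltgtP z z'; last by rewrite !subrr mulr0.
- have d0 : 0 < z' - z by rewrite subr_gt0.
  have gqr := cvg_dnbhs_at_right gq.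
  rewrite -ler_pdivrMr // -(cvg_lim _ gqr) //.
  apply: limr_ge; first by apply/cvg_ex; eexists; exact: gqr.
  near=> h.
  have h0 : 0 < h by near: h; exact: nbhs_right_gt.
  have hd : h < z' - z by near: h; exact: nbhs_right_lt.
  have t01 : 0 <= h / (z' - z) <= 1.
    by rewrite ler_pdivlMr // mul0r ltW //= ler_pdivrMr // mul1r ltW.
  have := @concave_chord z z' h hz hz' (negbT (lt_eqF lt)) t01.
  move=> chord_h; rewrite (_ : _ / _ = h^-1 * (h / (z' - z) * (g z' - g z))).
    by rewrite ler_wpM2l // invr_ge0 ltW.
  by field; rewrite !gt_eqF.
- have d0 : z' - z < 0 by rewrite subr_lt0.
  have gql := cvg_dnbhs_at_left gq.
  rewrite -ler_ndivlMr // -(cvg_lim _ gql) //.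
  apply: limr_le; first by apply/cvg_ex; eexists; exact: gql.
  near=> h.
  have h0 : h < 0 by near: h; exact: nbhs_left_lt.
  have hd : z' - z < h by near: h; exact: nbhs_left_gt.
  have t01 : 0 <= h / (z' - z) <= 1.
    by rewrite ler_ndivlMr // mul0r ltW //= ler_ndivrMr // mul1r ltW.
  have := @concave_chord z z' h hz hz' (negbT (gt_eqF gt)) t01.
  move=> chord_h; rewrite (_ : _ / _ = h^-1 * (h / (z' - z) * (g z' - g z))).
    by rewrite ler_wnM2l // invr_le0 ltW.
  by field; rewrite !lt_eqF.
Unshelve. all: by end_near.
Qed.

End Concave.

Lemma expR_ge_quartic (s : R) : -4 <= s -> 1 + s + s ^+ 2 * (6 + s) / 16 <= expR s.
Proof.
move=> s4; have -> : expR s = expR (s / 4) ^+ 4 by rewrite -expRM_natl; congr expR; field.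
apply: le_trans (_ : (1 + s / 4) ^+ 4 <= _).
  have : 0 <= (s / 4) ^+ 4 by rewrite exprn_even_ge0.
  by rewrite !exprS expr0; lra.
by rewrite lerXn2r ?nnegrE ?expR_ge0 ?expR_ge1Dx //; lra.
Qed.

Lemma one_add_le_expR (t k : R) : 0 <= k <= 1 / 4 -> k * `|t| <= 1 / 8 ->
  1 + t <= expR (t - k * t ^+ 2).
Proof.
move=> /andP[k0 k1] kt.
have [|t1] := leP t (-1); first by move=> t1; apply: le_trans (expR_ge0 _); lra.
set s := t - k * t ^+ 2.
have ktt : k * t ^+ 2 <= `|t| / 8.
  rewrite -real_normK ?num_real // expr2 mulrA; have := normr_ge0 t; nra.
have kt4 : k * t ^+ 2 <= t ^+ 2 / 4 by have := sqr_ge0 t; nra.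
suff : -4 <= s /\ k * t ^+ 2 <= s ^+ 2 * (6 + s) / 16.
  case=> s4 ks; apply: le_trans _ (expR_ge_quartic s4).
  by have : s = t - k * t ^+ 2 by []; lra.
have [t0|t0] := leP 0 t.
- have ss : 7 * t / 8 <= s by rewrite /s; move: ktt; rewrite ger0_norm //; lra.
  have s2 : 49 / 64 * t ^+ 2 <= s ^+ 2 by rewrite !expr2; nra.
  split; first lra.
  have : 6 * s ^+ 2 <= s ^+ 2 * (6 + s) by have := sqr_ge0 s; nra.
  by have := sqr_ge0 t; lra.
- have ss : 9 * t / 8 <= s by rewrite /s; move: ktt; rewrite ltr0_norm //; lra.
  have st : s <= t by rewrite /s; have := sqr_ge0 t; nra.
  have s2 : t ^+ 2 <= s ^+ 2 by rewrite !expr2; nra.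
  split; first lra.
  have : 4 * s ^+ 2 <= s ^+ 2 * (6 + s) by have := sqr_ge0 s; nra.
  lra.
Qed.

Lemma exp_concave_tangent_bound (l : R -> R) (alpha beta G r z z' : R) :
  0 < alpha -> 0 <= beta -> 2 * beta <= alpha -> 8 * beta * G * r <= 1 ->
  exp_concave_on alpha r l -> derivable l z 1 -> `|derive1 l z| <= G ->
  `|z| <= r -> `|z'| <= r ->
  l z - l z' <= derive1 l z * (z - z') - beta / 2 * (derive1 l z * (z - z')) ^+ 2.
Proof.
move=> a0 b0 ba bGr lcave dl lG hz hz'.
set u := derive1 l z; set h := z - z'.
have [dg g'z] : is_derive z 1 (expR \o (- alpha \*: l)) (expR (- alpha * l z) * (- alpha * u)).
  apply: is_derive1_comp; rewrite /u derive1E.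
  exact: is_deriveZ (derivableP dl).
have tangent : expR (- alpha * (l z' - l z)) <= 1 + alpha * u * h.
  have := @concave_le_tangent (expR \o (- alpha \*: l)) r lcave z z' hz hz' dg.
  rewrite derive1E g'z /= /GRing.scale /=.
  have -> : expR (- alpha * l z') = expR (- alpha * l z) * expR (- alpha * (l z' - l z)).
    by rewrite -expRD; congr expR; ring.
  by have := expR_gt0 (- alpha * l z); rewrite /h; nra.
have hh : `|h| <= 2 * r by rewrite (le_trans (ler_normB _ _)) //; lra.
(* [1 + t <= expR (t - k t^2)] with [t = alpha u h], [k = beta / (2 alpha)]
   turns the tangent bound into the claim after taking logarithms. *)
have kt : beta / (2 * alpha) * `|alpha * u * h| <= 1 / 8.
  have -> : beta / (2 * alpha) * `|alpha * u * h| = beta / 2 * (`|u| * `|h|).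
    by rewrite !normrM (gtr0_norm a0); field; rewrite gt_eqF.
  have : `|u| * `|h| <= G * (2 * r) by rewrite ler_pM.
  by have := normr_ge0 u; have := normr_ge0 h; nra.
have k14 : 0 <= beta / (2 * alpha) <= 1 / 4.
  rewrite ler_pdivlMr ?ler_pdivrMr ?mulr_gt0 //; lra.
have := le_trans tangent (one_add_le_expR k14 kt); rewrite ler_expR.
have -> : alpha * u * h - beta / (2 * alpha) * (alpha * u * h) ^+ 2
    = alpha * (u * h - beta / 2 * (u * h) ^+ 2) by field; rewrite gt_eqF.
by move=> H; rewrite -(ler_pM2l a0); lra.
Qed.

Lemma exp_concave_lipschitz (l : R -> R) (alpha G r z z' : R) : 0 < alpha ->
  exp_concave_on alpha r l -> (forall v, derivable l v 1) ->
  (forall v, `|derive1 l v| <= G) ->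
  `|z| <= r -> `|z'| <= r -> `|l z - l z'| <= G * `|z - z'|.
Proof.
move=> a0 lcave dl lG.
suff sub_le v v' : `|v| <= r -> `|v'| <= r -> l v - l v' <= G * `|v - v'|.
  by move=> hz hz'; rewrite ler_norml lerNl opprB {1}distrC !sub_le.
move=> hv hv'.
have := @exp_concave_tangent_bound l alpha 0 G r v v' a0 (lexx 0) _ _ lcave (dl v) (lG v) hv hv'.
rewrite !(mulr0, mul0r) subr0 => /(_ (ltW a0) ler01) /le_trans; apply.
by rewrite (le_trans (ler_norm _)) // normrM ler_wpM2r.
Qed.

Lemma derivable_continuous (l : R -> R) : (forall z, derivable l z 1) -> continuous l.
Proof. by move=> dl z; apply/differentiable_continuous/derivable1_diffP. Qed.

Lemma measurable_derive1 (l : R -> R) : (forall z, derivable l z 1) ->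
  measurable_fun setT (derive1 l).
Proof.
move=> dl; have lc := derivable_continuous dl.
apply: (@measurable_realfun.measurable_fun_cvg _ _ _ _
  (fun m z => (harmonic m)^-1 * (l (harmonic m + z) - l z))).
  move=> m; apply: measurable_realfun.continuous_measurable_fun => z.
  apply: cvgM; first exact: cvg_cst.
  apply: cvgB; last exact: lc.
  by apply: continuous_comp; [apply: cvgD; [exact: cvg_cst | exact: cvg_id] | exact: lc].
move=> z _; have /cvg_at_rightP := cvg_dnbhs_at_right (derive1_quotient_cvg (dl z)).
by apply; split; [exact: harmonic_gt0 | exact: cvg_harmonic].
Qed.

(* Assumption (II) controls [E[l'^2 a^2]] rather than [E[(l' Y a)^2]]; the
   defect [(1 - Y^2)] is paid for by the linear term since [|Y| <= 1]. *)
Lemma tangent_gap_le_amgm (b G c V Y A : R) :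
  0 <= b -> 0 < c -> `|V| <= G -> `|Y| <= 1 -> b * G * `|A| <= 1 / 4 ->
  V * (Y * A) - b / 2 * (V * (Y * A)) ^+ 2 + b / 2 * (V ^+ 2 * A ^+ 2)
    <= G * (A ^+ 2 / c + c) / 2.
Proof.
move=> b0 c0 VG Y1 bGA.
have G0 : 0 <= G := le_trans (normr_ge0 V) VG.
have -> : V * (Y * A) - b / 2 * (V * (Y * A)) ^+ 2 + b / 2 * (V ^+ 2 * A ^+ 2)
    = V * (Y * A) + b / 2 * (V ^+ 2 * `|A| ^+ 2 * (1 - `|Y| ^+ 2)).
  by rewrite !real_normK ?num_real //; ring.
have lin : V * (Y * A) <= G * (`|Y| * `|A|).
  by rewrite (le_trans (ler_norm _)) // !normrM ler_wpM2r ?mulr_ge0.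
have quad : b / 2 * (V ^+ 2 * `|A| ^+ 2 * (1 - `|Y| ^+ 2)) <= G * `|A| * (1 - `|Y|).
  have V2 : V ^+ 2 <= G ^+ 2 by rewrite -real_normK ?num_real // lerXn2r ?nnegrE.
  have Y0 := normr_ge0 Y; have A0 := normr_ge0 A.
  have Y2 : 0 <= 1 - `|Y| ^+ 2 by rewrite subr_ge0 expr_le1.
  have bGAY : b / 2 * (G * `|A| * (1 + `|Y|)) <= 1 by nra.
  apply: le_trans (_ : b / 2 * (G ^+ 2 * `|A| ^+ 2 * (1 - `|Y| ^+ 2)) <= _).
    by rewrite ler_wpM2l ?divr_ge0 // ler_wpM2r // ler_wpM2r ?sqr_ge0.
  have -> : b / 2 * (G ^+ 2 * `|A| ^+ 2 * (1 - `|Y| ^+ 2))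
      = G * `|A| * (1 - `|Y|) * (b / 2 * (G * `|A| * (1 + `|Y|))) by ring.
  by rewrite ler_piMr // !mulr_ge0 // subr_ge0.
have amgm : G * `|A| <= G * (A ^+ 2 / c + c) / 2.
  rewrite -mulrA ler_wpM2l // -real_normK ?num_real //.
  rewrite -subr_ge0 (_ : _ - _ = (`|A| - c) ^+ 2 / (2 * c)).
    by rewrite divr_ge0 ?sqr_ge0 ?mulr_ge0 ?ltW.
  by field; rewrite gt_eqF.
lra.
Qed.

Lemma excess_loss_le (l : R -> R) (alpha beta G r c Y p q : R) :
  0 < alpha -> 0 <= beta -> 2 * beta <= alpha -> 8 * beta * G * r <= 1 -> 0 < c ->
  exp_concave_on alpha r l -> derivable l (Y * p) 1 -> `|derive1 l (Y * p)| <= G ->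
  `|Y| <= 1 -> `|p| <= r -> `|q| <= r ->
  l (Y * p) - l (Y * q) + beta / 2 * (derive1 l (Y * p) ^+ 2 * (p - q) ^+ 2)
    <= G * ((p - q) ^+ 2 / c + c) / 2.
Proof.
move=> a0 b0 ba bGr c0 lcave dl lG Y1 hp hq.
have Yr v : `|v| <= r -> `|Y * v| <= r.
  by move=> hv; rewrite normrM -[r]mul1r ler_pM.
have := @exp_concave_tangent_bound l alpha beta G r (Y * p) (Y * q) a0 b0 ba bGr lcave dl lG
  (Yr _ hp) (Yr _ hq).
rewrite -mulrBr => tangent.
have bGpq : beta * G * `|p - q| <= 1 / 4.
  have G0 : 0 <= G := le_trans (normr_ge0 _) lG.
  have : `|p - q| <= 2 * r by rewrite (le_trans (ler_normB _ _)) //; lra.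
  by have := mulr_ge0 b0 G0; nra.
have := @tangent_gap_le_amgm beta G c _ Y (p - q) b0 c0 lG Y1 bGpq; lra.
Qed.

End RealFunctions.

Section BoundedIntegration.
Context (R : realType) (dT : measure_display) (T : measurableType dT)
  (P : probability T R).
Implicit Types f g : T -> R.

Definition bounded_measurable f :=
  measurable_fun setT f /\ exists M, forall t, `|f t| <= M.

Lemma bounded_measurable_integrable f :
  bounded_measurable f -> P.-integrable setT (EFin \o f).
Proof.
move=> [mf [M fM]]; apply: measurable_bounded_integrable => //.
  exact: le_lt_trans (probability_le1 P measurableT) (ltry 1).
exists M; split; first by rewrite num_real.
by move=> N MN t _; apply: le_trans (fM t) (ltW MN).
Qed.

Lemma bounded_measurable_cst c : bounded_measurable (fun=> c).
Proof. by split; [exact: measurable_cst | exists `|c|]. Qed.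

Lemma bounded_measurableD f g : bounded_measurable f -> bounded_measurable g ->
  bounded_measurable (fun t => f t + g t).
Proof.
move=> [mf [M fM]] [mg [N gN]]; split; first exact: measurable_realfun.measurable_funD.
by exists (M + N) => t; rewrite (le_trans (ler_normD _ _)) ?lerD.
Qed.

Lemma bounded_measurableB f g : bounded_measurable f -> bounded_measurable g ->
  bounded_measurable (fun t => f t - g t).
Proof.
move=> [mf [M fM]] [mg [N gN]]; split; first exact: measurable_realfun.measurable_funB.
by exists (M + N) => t; rewrite (le_trans (ler_normB _ _)) ?lerD.
Qed.

Lemma bounded_measurableM f g : bounded_measurable f -> bounded_measurable g ->
  bounded_measurable (fun t => f t * g t).
Proof.
move=> [mf [M fM]] [mg [N gN]]; split; first exact: measurable_realfun.measurable_funM.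
by exists (M * N) => t; rewrite normrM ler_pM.
Qed.

Lemma bounded_measurable_sum (I : Type) (s : seq I) (F : I -> T -> R) :
  (forall i, bounded_measurable (F i)) ->
  bounded_measurable (fun t => \sum_(i <- s) F i t).
Proof.
move=> bF; elim: s => [|i s IH].
  by under eq_fun do rewrite big_nil; exact: bounded_measurable_cst.
by under eq_fun do rewrite big_cons; exact: bounded_measurableD.
Qed.

Lemma bounded_RintegralD f g : bounded_measurable f -> bounded_measurable g ->
  \int[P]_t (f t + g t) = \int[P]_t f t + \int[P]_t g t.
Proof.
by move=> /bounded_measurable_integrable ? /bounded_measurable_integrable ?; exact: RintegralD.
Qed.

Lemma bounded_RintegralB f g : bounded_measurable f -> bounded_measurable g ->
  \int[P]_t (f t - g t) = \int[P]_t f t - \int[P]_t g t.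
Proof.
by move=> /bounded_measurable_integrable ? /bounded_measurable_integrable ?; exact: RintegralB.
Qed.

Lemma bounded_RintegralZl c f : bounded_measurable f ->
  \int[P]_t (c * f t) = c * \int[P]_t f t.
Proof. by move=> /bounded_measurable_integrable ?; exact: RintegralZl. Qed.

Lemma bounded_le_Rintegral f g : bounded_measurable f -> bounded_measurable g ->
  (forall t, f t <= g t) -> \int[P]_t f t <= \int[P]_t g t.
Proof.
move=> /bounded_measurable_integrable ? /bounded_measurable_integrable ? fg.
exact: le_Rintegral.
Qed.

Lemma bounded_Rintegral_sum (I : Type) (s : seq I) (F : I -> T -> R) :
  (forall i, bounded_measurable (F i)) ->
  \int[P]_t (\sum_(i <- s) F i t) = \sum_(i <- s) \int[P]_t F i t.
Proof.
move=> bF; elim: s => [|i s IH].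
  by under eq_Rintegral do rewrite big_nil; rewrite big_nil Rintegral_cst // mul0r.
under eq_Rintegral do rewrite big_cons.
by rewrite bounded_RintegralD ?IH ?big_cons //; exact: bounded_measurable_sum.
Qed.

Lemma probability_Rintegral_cst c : \int[P]_t c = c.
Proof.
rewrite Rintegral_cst // (_ : fine (P setT) = 1) ?mulr1 //.
exact: (congr1 fine (probability_setT P)).
Qed.

End BoundedIntegration.

Section EuclideanDot.
Context (R : realType) (d : nat).
Implicit Types (u v w : 'cV[R]_d).

Lemma dotvBl u v w : dotv (u - v) w = dotv u w - dotv v w.
Proof. by rewrite /dotv -sumrB; apply: eq_bigr => k _; rewrite !mxE mulrBl. Qed.

Lemma dotvv_ge0 u : 0 <= dotv u u.
Proof. by apply: sumr_ge0 => k _; rewrite -expr2 sqr_ge0. Qed.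

Lemma sqr_enorm u : enorm u ^+ 2 = dotv u u.
Proof. exact/sqr_sqrtr/dotvv_ge0. Qed.

Lemma dotv_amgm u v (a b : R) :
  2 * (a * b) * dotv u v <= b ^+ 2 * dotv u u + a ^+ 2 * dotv v v.
Proof.
rewrite /dotv !mulr_sumr -big_split /=; apply: ler_sum => k _.
by have := sqr_ge0 (b * u k 0 - a * v k 0); rewrite !expr2; lra.
Qed.

Lemma normr_dotv_le u v (r s : R) : 0 < r -> 0 < s ->
  enorm u <= r -> enorm v <= s -> `|dotv u v| <= r * s.
Proof.
move=> r0 s0 ur vs.
have sq_le w (e : R) : enorm w <= e -> dotv w w <= e ^+ 2.
  rewrite -sqr_enorm => we.
  by rewrite lerXn2r ?nnegrE ?sqrtr_ge0 // (le_trans _ we) ?sqrtr_ge0.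
have amgm_le (e : R) : e ^+ 2 = 1 -> e * dotv u v <= r * s.
  move=> e2; have := dotv_amgm u v (e * r) s; rewrite exprMn e2 mul1r => amgm.
  have := ler_wpM2l (sqr_ge0 s) (sq_le _ _ ur).
  have := ler_wpM2l (sqr_ge0 r) (sq_le _ _ vs).
  move=> B2 B1; rewrite -(ler_pM2l (_ : 0 < 2 * (r * s))) ?mulr_gt0 //.
  by move: amgm B1 B2; rewrite !expr2; lra.
rewrite ler_norml -lerNl -mulN1r amgm_le ?sqrrN ?expr1n //=.
by rewrite -[dotv u v]mul1r amgm_le ?expr1n.
Qed.

Lemma normr_coord_le u k : `|u k 0| <= enorm u.
Proof.
rewrite -sqrtr_sqr ler_sqrt ?dotvv_ge0 // /dotv (bigD1 k) //= -expr2 lerDl.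
by apply: sumr_ge0 => j _; rewrite -expr2 sqr_ge0.
Qed.

End EuclideanDot.

Section Moments.
Context (R : realType) (dT : measure_display) (T : measurableType dT)
  (P : probability T R) (d : nat) (x : T -> 'cV[R]_d).
Hypothesis mx : forall k : 'I_d, measurable_fun setT (fun t => x t k 0).
Hypothesis x1 : forall t, enorm (x t) <= 1.

Lemma bounded_measurable_coord k : bounded_measurable (fun t => x t k 0).
Proof. by split; [exact: mx | exists 1 => t; exact: le_trans (normr_coord_le _ _) (x1 t)]. Qed.

Lemma bounded_measurable_dotv v : bounded_measurable (fun t => dotv v (x t)).
Proof.
rewrite /dotv; apply: bounded_measurable_sum => k.
apply: bounded_measurableM; [exact: bounded_measurable_cst | exact: bounded_measurable_coord].
Qed.

Lemma qform_moment (F : T -> R) (v : 'cV[R]_d) : bounded_measurable F ->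
  qform (\matrix_(i, j) \int[P]_t (F t * (x t i 0 * x t j 0))) v
    = \int[P]_t (F t * dotv v (x t) ^+ 2).
Proof.
move=> bF.
have bFx i j : bounded_measurable (fun t => F t * (x t i 0 * x t j 0)).
  by do 2!apply: bounded_measurableM => //; exact: bounded_measurable_coord.
have expand t : F t * dotv v (x t) ^+ 2
    = \sum_(i < d) \sum_(j < d) v i 0 * v j 0 * (F t * (x t i 0 * x t j 0)).
  rewrite expr2 {1}/dotv mulr_suml mulr_sumr; apply: eq_bigr => i _.
  by rewrite /dotv !mulr_sumr; apply: eq_bigr => j _; ring.
under eq_Rintegral do rewrite expand.
rewrite bounded_Rintegral_sum; last first.
  move=> i; apply: bounded_measurable_sum => j.
  by apply: bounded_measurableM => //; exact: bounded_measurable_cst.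
rewrite /qform mxE; under eq_bigr do rewrite mxE mulr_suml.
rewrite exchange_big /=; apply: eq_bigr => i _.
rewrite bounded_Rintegral_sum; last first.
  move=> j; by apply: bounded_measurableM => //; exact: bounded_measurable_cst.
apply: eq_bigr => j _; rewrite bounded_RintegralZl // !mxE; ring.
Qed.

Lemma qform_second_moment v :
  qform (second_moment P x) v = \int[P]_t (dotv v (x t) ^+ 2).
Proof.
have -> : second_moment P x = \matrix_(i, j) \int[P]_t (1 * (x t i 0 * x t j 0)).
  by apply/matrixP => i j; rewrite !mxE; apply: eq_Rintegral => t _; rewrite mul1r.
rewrite qform_moment; last exact: bounded_measurable_cst.
by apply: eq_Rintegral => t _; rewrite mul1r.
Qed.

Section Loss.
Variables (y : T -> R) (l : R -> R) (alpha G r : R).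
Hypothesis my : measurable_fun setT y.
Hypothesis y1 : forall t, -1 <= y t <= 1.
Hypotheses (r0 : 0 < r) (a0 : 0 < alpha).
Hypothesis lcave : exp_concave_on alpha r l.
Hypothesis dl : forall z, derivable l z 1.
Hypothesis lG : forall z, `|derive1 l z| <= G.

Lemma normr_y_le t : `|y t| <= 1.
Proof. by rewrite ler_norml; case/andP: (y1 t) => -> ->. Qed.

Lemma normr_dotv_sample_le w t : enorm w <= r -> `|dotv w (x t)| <= r.
Proof. by move=> wr; rewrite -[r]mulr1 normr_dotv_le. Qed.

Lemma bounded_measurable_margin w : bounded_measurable (fun t => y t * dotv w (x t)).
Proof.
apply: bounded_measurableM _ (bounded_measurable_dotv w).
by split => //; exists 1; exact: normr_y_le.
Qed.

Lemma bounded_measurable_loss w : enorm w <= r ->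
  bounded_measurable (fun t => l (y t * dotv w (x t))).
Proof.
move=> wr; split.
  apply: measurableT_comp (bounded_measurable_margin w).1.
  exact: measurable_realfun.continuous_measurable_fun (derivable_continuous dl).
exists (`|l 0| + G * r) => t.
have zr : `|y t * dotv w (x t)| <= r.
  by rewrite normrM -[r]mul1r ler_pM ?normr_y_le ?normr_dotv_sample_le.
have := exp_concave_lipschitz a0 lcave dl lG zr (_ : `|0| <= r).
rewrite normr0 ltW // subr0 => /(_ isT) lip.
have G0 : 0 <= G := le_trans (normr_ge0 _) (lG 0).
have := ler_wpM2l G0 zr; have := lerB_dist (l (y t * dotv w (x t))) (l 0).
by lra.
Qed.

Lemma bounded_measurable_derive_margin w :
  bounded_measurable (fun t => derive1 l (y t * dotv w (x t))).
Proof.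
split; last by exists G => t; exact: lG.
exact: measurableT_comp (measurable_derive1 dl) (bounded_measurable_margin w).1.
Qed.

Lemma qform_weighted_moment w v : qform (weighted_moment P l x y w) v
  = \int[P]_t (derive1 l (y t * dotv w (x t)) ^+ 2 * dotv v (x t) ^+ 2).
Proof.
rewrite qform_moment //.
by apply: bounded_measurableM; exact: bounded_measurable_derive_margin.
Qed.

Section Comparison.
Variables (beta c : R) (w wstar : 'cV[R]_d).
Hypotheses (b0 : 0 <= beta) (ba : 2 * beta <= alpha) (bGr : 8 * beta * G * r <= 1).
Hypotheses (c0 : 0 < c) (wr : enorm w <= r) (wsr : enorm wstar <= r).

Lemma excess_loss_sample_le t :
  l (y t * dotv w (x t)) - l (y t * dotv wstar (x t))
    + beta / 2 * (derive1 l (y t * dotv w (x t)) ^+ 2 * dotv (w - wstar) (x t) ^+ 2)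
  <= G / (2 * c) * dotv (w - wstar) (x t) ^+ 2 + G * c / 2.
Proof.
rewrite dotvBl (_ : G / (2 * c) * _ + _ = G * ((dotv w (x t) - dotv wstar (x t)) ^+ 2 / c + c) / 2).
  by apply: (excess_loss_le (alpha := alpha) (r := r)); rewrite ?normr_y_le ?normr_dotv_sample_le.
by field; rewrite gt_eqF.
Qed.

Lemma risk_gap_le (theta : R) :
  theta * qform (second_moment P x) (w - wstar)
    <= qform (weighted_moment P l x y w) (w - wstar) ->
  risk P l x y w - risk P l x y wstar
    + theta * beta / 2 * qform (second_moment P x) (w - wstar)
    <= G * (qform (second_moment P x) (w - wstar) / c + c) / 2.
Proof.
move=> II.
have bcst c' := @bounded_measurable_cst R dT T c'.
have bw := bounded_measurable_loss wr; have bws := bounded_measurable_loss wsr.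
have bgap := bounded_measurableB bw bws.
have ba2 : bounded_measurable (fun t => dotv (w - wstar) (x t) ^+ 2).
  by apply: bounded_measurableM; exact: bounded_measurable_dotv.
have bUa : bounded_measurable
    (fun t => derive1 l (y t * dotv w (x t)) ^+ 2 * dotv (w - wstar) (x t) ^+ 2).
  apply: bounded_measurableM _ ba2.
  by apply: bounded_measurableM; exact: bounded_measurable_derive_margin.
have bUa' := bounded_measurableM (bcst (beta / 2)) bUa.
have ba2' := bounded_measurableM (bcst (G / (2 * c))) ba2.
have := bounded_le_Rintegral P (bounded_measurableD bgap bUa')
  (bounded_measurableD ba2' (bcst _)) excess_loss_sample_le.
rewrite bounded_RintegralD ?bounded_RintegralB ?bounded_RintegralZl //.
rewrite bounded_RintegralD ?bounded_RintegralZl ?probability_Rintegral_cst //.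
rewrite -qform_second_moment -qform_weighted_moment -/(risk P l x y w) -/(risk P l x y wstar).
have : beta / 2 * (theta * qform (second_moment P x) (w - wstar))
    <= beta / 2 * qform (weighted_moment P l x y w) (w - wstar).
  by rewrite ler_wpM2l ?divr_ge0.
have -> : G * (qform (second_moment P x) (w - wstar) / c + c) / 2
    = G / (2 * c) * qform (second_moment P x) (w - wstar) + G * c / 2.
  by field; rewrite gt_eqF.
lra.
Qed.
End Comparison.
End Loss.
End Moments.

Lemma half_min_inv_bounds (R : realType) (alpha G r beta : R) :
  0 < alpha -> 0 < G -> 0 < r -> beta = 2^-1 * Num.min alpha (4 * G * r)^-1 ->
  [/\ 0 <= beta, 2 * beta <= alpha & 8 * beta * G * r <= 1].
Proof.
move=> a0 G0 r0 ->; rewrite mulrA divff // mul1r ge_min lexx.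
have : Num.min alpha (4 * G * r)^-1 * (4 * G * r) <= 1.
  by rewrite -ler_pdivlMr ?mulr_gt0 // div1r ge_min lexx orbT.
by split=> //; [rewrite mulr_ge0 // le_min ltW //= invr_ge0 ltW ?mulr_gt0 | lra].
Qed.

Lemma sum_amgm_le (R : realType) (n : nat) (Rad G kappa : R) (gap A : nat -> R) :
  (0 < n)%N -> 0 < Rad -> 0 < G ->
  (forall i, (1 <= i < n.+1)%N ->
     gap i + kappa * A i <= G * (A i / (2 * Rad / n%:R) + 2 * Rad / n%:R) / 2) ->
  \sum_(1 <= i < n.+1) A i <= 4 * Rad ^+ 2 / n%:R ->
  \sum_(1 <= i < n.+1) gap i + kappa * \sum_(1 <= i < n.+1) A i <= 2 * Rad * G.
Proof.
move=> n0 R0 G0 gapA A_le.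
have nR : (0 : R) < n%:R by rewrite ltr0n.
rewrite mulr_sumr -big_split /=; apply: le_trans (ler_sum_nat gapA) _.
set c := 2 * Rad / n%:R; have c0 : 0 < c by rewrite divr_gt0 ?mulr_gt0.
rewrite (eq_bigr (fun i => G / (2 * c) * A i + G * c / 2)); last first.
  by move=> i _; field; rewrite gt_eqF.
rewrite big_split /= -mulr_sumr sumr_const_nat subn1 /= -[_ *+ n]mulr_natr.
have : G / (2 * c) * \sum_(1 <= i < n.+1) A i <= G / (2 * c) * (4 * Rad ^+ 2 / n%:R).
  by rewrite ler_wpM2l // divr_ge0 ?mulr_ge0 // ltW.
have -> : G / (2 * c) * (4 * Rad ^+ 2 / n%:R) = Rad * G.
  by rewrite /c; field; rewrite !gt_eqF.
have -> : G * c / 2 * n%:R = Rad * G by rewrite /c; field; rewrite gt_eqF.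
lra.
Qed.

Theorem lemma8 (R : realType) (dT : measure_display) (T : measurableType dT)
  (P : probability T R) (d : nat) (x : T -> 'cV[R]_d) (y : T -> R)
  (n : nat) (s : nat -> T)
  (Rad alpha G theta eta1 a : R) (l : R -> R)
  (wstar : 'cV[R]_d) (w : nat -> 'cV[R]_d) :
  (forall k : 'I_d, measurable_fun setT (fun t => x t k 0)) ->
  measurable_fun setT y ->
  (forall t, enorm (x t) <= 1) ->
  (forall t, -1 <= y t <= 1) ->
  (0 < n)%N ->
  0 < Rad -> 0 < alpha -> 0 < G ->
  (forall z, 0 <= l z) ->
  (forall z, derivable l z 1) ->
  convex_on_R l ->
  exp_concave_on alpha Rad l ->
  (forall z, `| derive1 l z | <= G) ->
  enorm wstar <= Rad ->
  (forall u, enorm u <= Rad -> risk P l x y wstar <= risk P l x y u) ->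
  (* Assumption (II) with constant theta > 0 *)
  0 < theta ->
  (forall u, enorm u <= Rad -> forall v : 'cV[R]_d,
     theta * qform (second_moment P x) v <= qform (weighted_moment P l x y u) v) ->
  0 < eta1 -> 0 < a ->
  w 1%N = 0 ->
  (forall i : nat, (1 <= i < n)%N ->
     enorm (w i.+1) <= Rad /\
     forall u, enorm u <= Rad ->
       step_obj l x y s eta1 a (w i) i (w i.+1)
         <= step_obj l x y s eta1 a (w i) i u) ->
  (* A <= 4 R^2 / n *)
  \sum_(1 <= i < n.+1) qform (second_moment P x) (w i - wstar)
     <= 4 * Rad ^+ 2 / n%:R ->
  \sum_(1 <= i < n.+1) (risk P l x y (w i) - risk P l x y wstar)
   + theta * (2^-1 * Num.min alpha (4 * G * Rad)^-1) / 2
       * \sum_(1 <= i < n.+1) qform (second_moment P x) (w i - wstar)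
   <= 2 * Rad * G.
Proof.
move=> mx my x1 y1 n0 R0 a0 G0 _ dl _ lcave lG wsR _ _ II _ _ w1 alg A_le.
have [b0 ba bGr] := half_min_inv_bounds a0 G0 R0 erefl.
have wR i : (1 <= i < n.+1)%N -> enorm (w i) <= Rad.
  case: i => [|[|j]] // /andP[_ jn].
    by rewrite w1 /enorm /dotv big1 ?sqrtr0 ?ltW // => k _; rewrite mxE mul0r.
  by case: (alg j.+1).
have c0 : 0 < 2 * Rad / n%:R by rewrite divr_gt0 ?mulr_gt0 ?ltr0n.
apply: sum_amgm_le => // i ilt.
exact: (risk_gap_le (P := P) mx x1 my y1 R0 a0 lcave dl lG b0 ba bGr c0 (wR i ilt) wsR
  (II _ (wR i ilt) _)).
Qed.
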